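(* Let $i\ge 2$ be an integer and let $C(i)$, $B(i)$ be as defined in the context. (a) $C(i)$ is an $\mathbb{F}$-linear $[2i,2i-1,1]$-code which is $(2i-1)$-bounded relative to the ordered basis $B(i)$. (b) Let $j$ be an integer with $1\le j\le 4i^2-6i+1$. Then ${\sf Code}(B(i),j)$ is an $\mathbb{F}$-linear $[n_j,k_j,d_j]$-code which is $u_j$-bounded relative to the ordered basis ${\sf Basis}(B(i),j)$, where \[ n_j=2i\prod_{\ell=1}^{j}(2i-1+\ell),\quad k_j=2i-1+j,\quad d_j=\prod_{\ell=1}^{j}(2i-1+\ell),\quad u_j=(2i-1)\prod_{\ell=1}^{j}(2i-2+\ell). \]
   Context: $\mathbb{F}$ is an arbitrary field and vectors in $\mathbb{F}^n$ are column vectors. The weight $\mathrm{wt}(x)$ of $x\in\mathbb{F}^n$ is its number of nonzero coordinates. An $[n,k,d]$-code is a $k$-dimensional subspace of $\mathbb{F}^n$ whose minimum distance (the minimum weight of a nonzero codeword) is $d$. Boundedness: let $u$ be a positive integer and let $C$ be an $[n,k,d]$-code with ordered basis $B=(a_1,\dots,a_k)$. Then $C$ is $u$-bounded relative to $B$ if all three of the following hold: (i) $\mathrm{wt}(a_j)=u$ for every $j$; (ii) $\mathrm{wt}\big(\sum_{j=1}^k a_j\big)=d$; (iii) $u\ge d(1+k^{-1})$. Construction: for an ordered basis $B=(a_1,\dots,a_k)$ of a code $C\le\mathbb{F}^n$, set $a_0:=0\in\mathbb{F}^n$. For $m=1,\dots,k+1$, let $a'_m\in\mathbb{F}^{n(k+1)}$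 be the column vector made of $k+1$ blocks of length $n$. Its $r$-th block, for $r=1,\dots,k+1$, is $a_{r-m}$, where the subscript is read modulo $k+1$ with representatives in $\{0,\dots,k\}$. Thus $a'_1=(0,a_1,\dots,a_k)^T$, $a'_2=(a_k,0,a_1,\dots,a_{k-1})^T$, …, $a'_{k+1}=(a_1,\dots,a_k,0)^T$ in block form. Define ${\sf Basis}(B)=(a'_1,\dots,a'_{k+1})$, and let ${\sf Code}(B)\le\mathbb{F}^{n(k+1)}$ be its $\mathbb{F}$-linear span. Iteration: ${\sf Code}(B,1)={\sf Code}(B)$ and ${\sf Basis}(B,1)={\sf Basis}(B)$. For $i\ge2$, ${\sf Code}(B,i)={\sf Code}({\sf Basis}(B,i-1))$ and ${\sf Basis}(B,i)={\sf Basis}({\sf Basis}(B,i-1))$. Matrices: $\mathcal{A}_1=\begin{bmatrix}0&-1\\1&0\end{bmatrix}$ and $\mathcal{B}_1=\begin{bmatrix}1&-1\\-1&1\end{bmatrix}$. Recursively, for $i\ge1$, $\mathcal{A}_{i+1}=\begin{bmatrix}\mathcal{A}_1&\mathcal{B}_i\\-\mathcal{B}_i^T&\mathcal{A}_i\end{bmatrix}$ and $\mathcal{B}_{i+1}=[\mathcal{B}_1\ \mathcal{B}_i]$, as block matrices over $\mathbb{F}$. Thus $\mathcal{A}_i\in\mathbb{F}^{2i\times 2i}$. Codes $C(i)$: write $\mathcal{A}_i=[a_1,\dots,a_{2i}]$ by columns. Then $B(i)=(a_1,\dots,a_{2i-1})$, and $C(i)\le\mathbb{F}^{2i}$ is the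 $\mathbb{F}$-linear span of $B(i)$. The columns of $\mathcal{A}_i$ are linearly independent, so $B(i)$ is an ordered basis of $C(i)$. *)

(* Vectors of F^n are column vectors 'cV[F]_n; an ordered
   basis (a_1,...,a_k) of a code in F^n is stored as the matrix 'M[F]_(n,k)
   whose j-th column is a_{j+1}. *)
From HB Require Import structures.
From mathcomp Require Import all_boot all_order all_algebra.
Set Implicit Arguments. Unset Strict Implicit. Unset Printing Implicit Defensive.
Import GRing.Theory.
Local Open Scope ring_scope.

Section Codes.
Variable F : fieldType.

Definition wt n (v : 'cV[F]_n) : nat := #|[pred t : 'I_n | v t ord0 != 0]|.

Definition in_code n k (M : 'M[F]_(n, k)) (v : 'cV[F]_n) : Prop :=
  exists c : 'cV[F]_k, v = M *m c.

Definition min_dist n k (M : 'M[F]_(n, k)) (d : nat) : Prop :=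
  (exists v, [/\ in_code M v, v != 0 & wt v = d]) /\
  (forall v, in_code M v -> v != 0 -> (d <= wt v)%N).

Definition is_code a b (M : 'M[F]_(a, b)) (n k d : nat) : Prop :=
  [/\ a = n, \rank M = k & min_dist M d].

Definition bounded a b (M : 'M[F]_(a, b)) (u : nat) : Prop :=
  \rank M = b /\
  exists d, [/\ min_dist M d,
               (forall j : 'I_b, wt (col j M) = u),
               wt (\sum_(j < b) col j M) = d
             & (d * (b + 1) <= u * b)%N].
(* (iii) u >= d (1 + 1/k) is written u*k >= d*(k+1) (k = b >= 1 here) *)

(* entry (t,s) of M, 0 outside the range *)
Definition ent n k (M : 'M[F]_(n, k)) (t s : nat) : F :=
  match (insub t : option 'I_n), (insub s : option 'I_k) with
  | Some t', Some s' => M t' s'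
  | _, _ => 0
  end.

(* Basis(B): column m (0-based m', paper m = m'+1) has, in its block r
   (0-based r', paper r = r'+1, rows r'*n .. r'*n+n-1) the vector a_s with
   s = (r - m) mod (k+1), a_0 = 0, a_s = column s-1 of M. *)
Definition basis_mx n k (M : 'M[F]_(n, k)) : 'M[F]_(n * k.+1, k.+1) :=
  \matrix_(p, m)
    let r := (p %/ n)%N in
    let t := (p %% n)%N in
    match ((r + k.+1 - m) %% k.+1)%N with
    | 0 => 0
    | s.+1 => ent M t s
    end.

Definition cmat := {nk : nat * nat & 'M[F]_(nk.1, nk.2)}.

Definition basis_step (X : cmat) : cmat :=
  existT (fun nk : nat * nat => 'M[F]_(nk.1, nk.2))
    ((projT1 X).1 * (projT1 X).2.+1, (projT1 X).2.+1)%N (basis_mx (projT2 X)).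

Definition basis_iter (j : nat) (X : cmat) : cmat := iter j basis_step X.

(* The matrices A_i, B_i : Bm i = B_{i+1}, Am i = A_{i+1} *)
Definition A1 : 'M[F]_(2 * 1) :=
  \matrix_(r, c) (if (r == c :> nat) then 0 else if (r == 0%N :> nat) then -1 else 1).
Definition B1 : 'M[F]_(2, 2 * 1) :=
  \matrix_(r, c) (if (r == c :> nat) then 1 else -1).

Lemma dimS i : (2 * 1 + 2 * i.+1 = 2 * i.+2)%N.
Proof. by rewrite !mulnS. Qed.

Fixpoint Bm (i : nat) : 'M[F]_(2, 2 * i.+1) :=
  match i with
  | 0 => B1
  | i'.+1 => castmx (erefl, dimS i') (row_mx B1 (Bm i'))
  end.

Fixpoint Am (i : nat) : 'M[F]_(2 * i.+1) :=
  match i with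
  | 0 => A1
  | i'.+1 => castmx (dimS i', dimS i')
               (block_mx A1 (Bm i') (- (Bm i')^T) (Am i'))
  end.

(* A_i for i >= 1 (A_0 is the empty matrix, never used) *)
Definition Amat (i : nat) : 'M[F]_(2 * i) :=
  match i return 'M[F]_(2 * i) with
  | 0 => 0
  | i'.+1 => Am i'
  end.

Definition Cbasis (i : nat) : 'M[F]_(2 * i, (2 * i).-1) :=
  \matrix_(r, c) Amat i r (widen_ord (leq_pred (2 * i)) c).

Definition Cmat (i : nat) : cmat :=
  existT (fun nk : nat * nat => 'M[F]_(nk.1, nk.2)) (2 * i, (2 * i).-1)%N
    (Cbasis i).

End Codes.

(* Boundedness is exactly what makes Code(B) bounded again.  Block r of a
   codeword of Code(B) is a codeword of C, namely the combination of
   a_1, ..., a_k with the coefficients of a'_1, ..., a'_(k+1) other than the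
   r-th one, rotated.  If every block is nonzero the codeword has weight at
   least (k+1) d; if some block vanishes, all coefficients but one vanish and
   the codeword is a multiple of a single a'_m, of weight k u >= (k+1) d.
   Since every a'_m has weight k u and their sum consists of k+1 copies of
   the sum of the a_s, Code(B) is an [n(k+1), k+1, (k+1) d]-code which is
   k u-bounded relative to Basis(B).  Starting from C(i), whose basis vectors
   have a single zero entry and sum to the last unit vector, the inequality
   u >= d (1 + 1/k) survives j steps as long as (2i-1)^2 >= 2i + j. *)

From HB Require Import structures.
From mathcomp Require Import all_boot all_order all_algebra.
From mathcomp Require Import zify.

Set Implicit Arguments. Unset Strict Implicit. Unset Printing Implicit Defensive.
Import GRing.Theory.
Local Open Scope ring_scope.

Section Weight.
Variable F : fieldType.

Lemma entE a b (M : 'M[F]_(a, b)) (x : 'I_a) (y : 'I_b) : ent M x y = M x y.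
Proof.
rewrite /ent; case: insubP => [x' _ ex|]; last by rewrite ltn_ord.
case: insubP => [y' _ ey|]; last by rewrite ltn_ord.
by congr (M _ _); apply: val_inj.
Qed.

Lemma ent_out a b (M : 'M[F]_(a, b)) x y : (a <= x)%N -> ent M x y = 0.
Proof. by move=> ax; rewrite /ent insubN // -leqNgt. Qed.

Lemma ent0 a b x y : ent (0 : 'M[F]_(a, b)) x y = 0.
Proof. by rewrite /ent; case: insub => [?|] //; case: insub => [?|] //; rewrite mxE. Qed.

Lemma wt0 a : wt (0 : 'cV[F]_a) = 0%N.
Proof. by apply: eq_card0 => t; rewrite !inE mxE eqxx. Qed.

Lemma wt_eq0 a (v : 'cV[F]_a) : (wt v == 0%N) = (v == 0).
Proof.
apply/idP/eqP => [/eqP v0|->]; last by rewrite wt0.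
apply/matrixP => x y; rewrite (ord1 y) mxE.
by apply/eqP; move: (card0_eq v0 x); rewrite !inE => /negbFE.
Qed.

Lemma wt_gt0 a (v : 'cV[F]_a) : (0 < wt v)%N = (v != 0).
Proof. by rewrite lt0n wt_eq0. Qed.

Lemma wtZ a (v : 'cV[F]_a) (x : F) : x != 0 -> wt (x *: v) = wt v.
Proof. by move=> x0; apply: eq_card => t; rewrite !inE mxE mulf_eq0 negb_or x0. Qed.

Lemma wt_nat_sum a (v : 'cV[F]_a) : wt v = (\sum_(0 <= p < a) (ent v p 0 != 0%R))%N.
Proof.
rewrite big_mkord /wt -sum1_card big_mkcond /=; apply: eq_bigr => t _.
by rewrite inE (entE v t ord0); case: (v t ord0 != 0).
Qed.

Lemma sum_col_mulmx a b (A : 'M[F]_(a, b)) : \sum_j col j A = A *m const_mx 1.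
Proof.
apply/matrixP => x y; rewrite summxE !mxE; apply: eq_bigr => j _.
by rewrite !mxE mulr1.
Qed.

Lemma col_freeP a b (A : 'M[F]_(a, b)) :
  reflect (forall c : 'cV_b, A *m c = 0 -> c = 0) (\rank A == b).
Proof.
rewrite -mxrank_tr; apply: (iffP idP) => [Afree c /(congr1 trmx)|Ainj].
  rewrite trmx_mul trmx0 => /eqP; rewrite mulmx_free_eq0 // => /eqP /(congr1 trmx).
  by rewrite trmxK trmx0.
apply: inj_row_free => v /(congr1 trmx); rewrite trmx_mul trmxK trmx0 => /Ainj.
by move/(congr1 trmx); rewrite trmxK trmx0.
Qed.

Lemma min_dist_gt0 a b (A : 'M[F]_(a, b)) d :
  min_dist A d -> [/\ (0 < a)%N, (0 < b)%N & (0 < d)%N].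
Proof.
case=> [[_ [[c ->] Ac0 <-]] _]; rewrite wt_gt0 Ac0; split => //.
  by case: a A c Ac0 => // A c; rewrite flatmx0 eqxx.
by case: b A c Ac0 => // A c; rewrite [c]flatmx0 mulmx0 eqxx.
Qed.

End Weight.

(* u-boundedness without the inequality (iii), which is checked separately at
   each step of the iteration. *)
Definition code_profile (F : fieldType) a b (A : 'M[F]_(a, b)) (d u : nat) :=
  [/\ \rank A = b, min_dist A d, forall j, wt (col j A) = u & wt (\sum_j col j A) = d].

Section Profile.
Variables (F : fieldType) (a b : nat) (A : 'M[F]_(a, b)) (d u : nat).
Hypothesis profA : code_profile A d u.

Lemma code_profile_is_code : is_code A a b d.
Proof. by case: profA. Qed.

Lemma code_profile_bounded : (d * b.+1 <= u * b)%N -> bounded A u.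
Proof. by case: profA => rkA Ad wt_colA wt_sumA bnd; split => //; exists d; rewrite addn1. Qed.

End Profile.

Definition cycsub (K r s : nat) : nat := if (s <= r)%N then (r - s)%N else (r + K - s)%N.

Section Cycsub.
Variables (K r : nat).
Hypothesis r_lt : (r < K)%N.

Lemma cycsubE s : (s < K)%N -> ((r + K - s) %% K)%N = cycsub K r s.
Proof.
move=> s_lt; rewrite /cycsub; case: (leqP s r) => sr; last by rewrite modn_small; lia.
have -> : (r + K - s = (r - s) + K)%N by lia.
by rewrite modnDr modn_small //; lia.
Qed.

Lemma cycsub_lt s : (s < K)%N -> (cycsub K r s < K)%N.
Proof. by move=> s_lt; rewrite /cycsub; case: (leqP s r) => ?; lia. Qed.

Lemma cycsubK s : (s < K)%N -> cycsub K r (cycsub K r s) = s.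
Proof. by move=> s_lt; rewrite /cycsub; case: (leqP s r) => ?; case: leqP => ?; lia. Qed.

Lemma cycsub_eq0 s : (s < K)%N -> (cycsub K r s == 0%N) = (s == r).
Proof. by move=> s_lt; rewrite /cycsub; case: (leqP s r) => ?; apply/eqP/eqP; lia. Qed.

Lemma eq_cycsub s s' : (s < K)%N -> (s' < K)%N ->
  (cycsub K r s == cycsub K r s') = (s == s').
Proof.
by move=> s_lt s'_lt; apply/eqP/eqP => [e|->] //; rewrite -(cycsubK s_lt) e cycsubK.
Qed.

End Cycsub.

Lemma sum_nat_blocks n K (G : nat -> nat) :
  (\sum_(0 <= p < n * K) G p = \sum_(r < K) \sum_(t < n) G (r * n + t))%N.
Proof.
rewrite mulnC big_nat_mul big_mkord; apply: eq_bigr => r _.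
rewrite -{1}[(r * n)%N]add0n big_addn mulSn addnK big_mkord; apply: eq_bigr => t _.
by rewrite addnC.
Qed.

Section BasisMx.
Variables (F : fieldType) (n k : nat) (M : 'M[F]_(n, k)).

(* Block r of [basis_mx M *m c] is [M *m block_coef r c]: block r of column m
   of [basis_mx M] is a_s for s = r - m mod k+1, so the coefficient of a_s in
   block r is c_(r - s). *)
Definition block_coef (r : nat) (c : 'cV[F]_k.+1) : 'cV[F]_k :=
  \col_(j < k) ent c (cycsub k.+1 r j.+1) 0.

Lemma basis_mx_mul_block (c : 'cV[F]_k.+1) (r : 'I_k.+1) (t : 'I_n) :
  ent (basis_mx M *m c) (r * n + t) 0 = (M *m block_coef r c) t 0.
Proof.
have n_gt0 : (0 < n)%N by apply: leq_ltn_trans (ltn_ord t).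
have p_lt : (r * n + t < n * k.+1)%N by have := ltn_ord r; have := ltn_ord t; nia.
rewrite (entE _ (Ordinal p_lt) ord0) mxE /basis_mx.
under eq_bigr do rewrite mxE /=.
rewrite divnMDl // modnMDl divn_small // modn_small // addn0.
pose h (s : 'I_k.+1) : 'I_k.+1 := inord (cycsub k.+1 r s).
have hK : involutive h.
  by move=> s; apply: val_inj; rewrite /= !inordK ?cycsubK ?cycsub_lt.
have r_lt := ltn_ord r.
rewrite (reindex_inj (inv_inj hK)) /= big_ord_recl.
rewrite mxE /h inordK ?cycsub_lt // cycsubE ?cycsub_lt // cycsubK // mul0r add0r.
apply: eq_bigr => j _; have j_lt : (j.+1 < k.+1)%N := ltn_ord j.
rewrite !mxE /= [bump 0 j]/bump add1n inordK ?cycsub_lt //.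
rewrite cycsubE ?cycsub_lt // cycsubK // (entE M t j).
by rewrite -(entE c _ ord0) /= inordK ?cycsub_lt.
Qed.

Lemma wt_basis_mx_mul (c : 'cV[F]_k.+1) :
  wt (basis_mx M *m c) = (\sum_(r < k.+1) wt (M *m block_coef r c))%N.
Proof.
rewrite wt_nat_sum sum_nat_blocks; apply: eq_bigr => r _.
rewrite wt_nat_sum big_mkord; apply: eq_bigr => t _.
by rewrite basis_mx_mul_block (entE _ t ord0).
Qed.

Lemma block_coef_entry (c : 'cV[F]_k.+1) (r m : 'I_k.+1) :
  r != m -> exists j : 'I_k, block_coef r c j 0 = c m 0.
Proof.
move=> rm; have r_lt := ltn_ord r; have m_lt := ltn_ord m.
have s_gt0 : cycsub k.+1 r m != 0%N by rewrite cycsub_eq0 // eq_sym.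
have s_lt : ((cycsub k.+1 r m).-1 < k)%N by have := cycsub_lt r_lt m_lt; lia.
exists (Ordinal s_lt); rewrite mxE /= prednK ?lt0n //.
by rewrite cycsubK // (entE _ m ord0).
Qed.

Lemma block_coef_delta_diag (m : 'I_k.+1) : block_coef m (delta_mx m 0) = 0.
Proof.
apply/matrixP => j y; have m_lt := ltn_ord m; have j_lt : (j.+1 < k.+1)%N := ltn_ord j.
rewrite !mxE (entE _ (Ordinal (cycsub_lt m_lt j_lt)) ord0) !mxE andbT.
rewrite -(inj_eq val_inj) /= -{2}(cycsubK m_lt m_lt) eq_cycsub ?cycsub_lt //.
by rewrite /cycsub leqnn subnn.
Qed.

Lemma block_coef_delta (r m : 'I_k.+1) :
  r != m -> exists j : 'I_k, block_coef r (delta_mx m 0) = delta_mx j 0.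
Proof.
move=> rm; have r_lt := ltn_ord r; have m_lt := ltn_ord m.
have s_gt0 : cycsub k.+1 r m != 0%N by rewrite cycsub_eq0 // eq_sym.
have s_lt : ((cycsub k.+1 r m).-1 < k)%N by have := cycsub_lt r_lt m_lt; lia.
exists (Ordinal s_lt); apply/matrixP => j y; have j_lt : (j.+1 < k.+1)%N := ltn_ord j.
rewrite !mxE (entE _ (Ordinal (cycsub_lt r_lt j_lt)) ord0) !mxE (ord1 y) !eqxx !andbT.
rewrite -!(inj_eq val_inj) /= -{1}(cycsubK r_lt m_lt) eq_cycsub ?cycsub_lt //.
by congr (_ %:R); apply/eqP/eqP; lia.
Qed.

Lemma block_coef_const (r : 'I_k.+1) : block_coef r (const_mx 1) = const_mx 1.
Proof.
apply/matrixP => j y; have j_lt : (j.+1 < k.+1)%N := ltn_ord j.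
by rewrite !mxE (entE _ (Ordinal (cycsub_lt (ltn_ord r) j_lt)) ord0) mxE.
Qed.

Lemma block_coef_eq0 (c : 'cV[F]_k.+1) (r : 'I_k.+1) :
  block_coef r c = 0 -> basis_mx M *m c = c r 0 *: col r (basis_mx M).
Proof.
move=> blk0; apply/matrixP => p y; rewrite (ord1 y) !mxE (bigD1 r) //= big1 ?addr0.
  by rewrite mulrC /basis_mx mxE.
move=> m mr; rewrite eq_sym in mr.
by have [j <-] := block_coef_entry c mr; rewrite blk0 !mxE mulr0.
Qed.

Lemma rank_basis_mx : (0 < k)%N -> \rank M = k -> \rank (basis_mx M) = k.+1.
Proof.
move=> k_gt0 /eqP/col_freeP M_inj; apply/eqP/col_freeP => c Bc0.
have blocks0 (r : 'I_k.+1) : block_coef r c = 0.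
  apply: M_inj; apply/matrixP => t y.
  by rewrite (ord1 y) -basis_mx_mul_block Bc0 ent0 mxE.
apply/matrixP => m y; rewrite (ord1 y) mxE.
pose r : 'I_k.+1 := if m == ord0 then ord_max else ord0.
have rm : r != m.
  rewrite /r; case: (m =P ord0) => [->|m_neq0]; last by rewrite eq_sym; apply/eqP.
  by rewrite -(inj_eq val_inj) /= -lt0n.
by have [j <-] := block_coef_entry c rm; rewrite blocks0 mxE.
Qed.

Lemma wt_col_basis_mx u :
  (forall j, wt (col j M) = u) -> forall m, wt (col m (basis_mx M)) = (k * u)%N.
Proof.
move=> wt_colM m; rewrite colE wt_basis_mx_mul (bigD1 m) //=.
rewrite block_coef_delta_diag mulmx0 wt0 add0n (eq_bigr (fun=> u)).
  by rewrite sum_nat_const cardC1 card_ord.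
by move=> r rm; have [j ->] := block_coef_delta rm; rewrite -colE.
Qed.

Lemma wt_sum_col_basis_mx d :
  wt (\sum_j col j M) = d -> wt (\sum_j col j (basis_mx M)) = (d * k.+1)%N.
Proof.
rewrite !sum_col_mulmx wt_basis_mx_mul => <-.
under eq_bigr do rewrite block_coef_const.
by rewrite sum_nat_const card_ord mulnC.
Qed.

Lemma min_dist_basis_mx d u : code_profile M d u -> (d * k.+1 <= u * k)%N ->
  min_dist (basis_mx M) (d * k.+1).
Proof.
case=> rkM Md wt_colM wt_sumM bnd; have /eqP/col_freeP M_inj := rkM.
have [_ _ d_gt0] := min_dist_gt0 Md.
split.
  exists (\sum_j col j (basis_mx M)); split.
  - by exists (const_mx 1); rewrite sum_col_mulmx.
  - by rewrite -wt_gt0 (wt_sum_col_basis_mx wt_sumM) muln_gt0 d_gt0.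
  - exact: wt_sum_col_basis_mx.
move=> _ [c ->] Bc_neq0.
case: (pickP (fun r : 'I_k.+1 => block_coef r c == 0)) => [r /eqP blk0 | blk_neq0].
  rewrite (block_coef_eq0 blk0) in Bc_neq0 *.
  have cr_neq0 : c r 0 != 0 by apply: contraNneq Bc_neq0 => ->; rewrite scale0r.
  by rewrite wtZ // (wt_col_basis_mx wt_colM) [(k * u)%N]mulnC.
have -> : (d * k.+1 = \sum_(r < k.+1) d)%N by rewrite sum_nat_const card_ord mulnC.
rewrite wt_basis_mx_mul; apply: leq_sum => r _.
apply: Md.2; first by exists (block_coef r c).
by apply: contraFneq (blk_neq0 r) => /M_inj ->.
Qed.

Lemma code_profile_basis_mx d u : code_profile M d u -> (d * k.+1 <= u * k)%N ->
  code_profile (basis_mx M) (d * k.+1) (k * u).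
Proof.
move=> prof bnd; have [rkM Md wt_colM wt_sumM] := prof.
have [_ k_gt0 _] := min_dist_gt0 Md.
split; [exact: rank_basis_mx | exact: min_dist_basis_mx prof bnd |
        exact: wt_col_basis_mx | exact: wt_sum_col_basis_mx].
Qed.
End BasisMx.

Section AEntries.
Variable F : fieldType.

Lemma row_mx_natE m n1 n2 (A : 'M[F]_(m, n1)) (B : 'M[F]_(m, n2)) (f : nat -> nat -> F) :
  (forall r c, A r c = f r c) -> (forall r c, B r c = f r (n1 + c)%N) ->
  forall r c, row_mx A B r c = f r c.
Proof.
by move=> AE BE r c; rewrite mxE; case: splitP => [j ->|j ->]; rewrite ?AE ?BE.
Qed.

Lemma block_mx_natE m1 m2 n1 n2 (A : 'M[F]_(m1, n1)) (B : 'M[F]_(m1, n2))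
    (C : 'M[F]_(m2, n1)) (D : 'M[F]_(m2, n2)) (f : nat -> nat -> F) :
  (forall r c, A r c = f r c) -> (forall r c, B r c = f r (n1 + c)%N) ->
  (forall r c, C r c = f (m1 + r)%N c) -> (forall r c, D r c = f (m1 + r)%N (n1 + c)%N) ->
  forall r c, block_mx A B C D r c = f r c.
Proof.
move=> AE BE CE DE r c; rewrite mxE; case: splitP => [i ->|i ->].
  exact: row_mx_natE.
by apply: (row_mx_natE (f := fun r c => f (m1 + r)%N c)).
Qed.

Definition parity_sign (r c : nat) : F := if odd r == odd c then 1 else -1.

(* Rows and columns 2a, 2a+1 of A_i form its a-th block row and column:
   the diagonal blocks are A_1, those above them B_1, those below -B_1. *)
Definition Aent (r c : nat) : F :=
  if (r./2 < c./2)%N then parity_sign r c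
  else if (c./2 < r./2)%N then - parity_sign r c
  else if odd r == odd c then 0 else if odd r then 1 else -1.

Lemma odd_add2 r : odd (2 * 1 + r) = odd r.
Proof. by rewrite oddD /=; case: (odd r). Qed.

Lemma parity_sign_add2l r c : parity_sign (2 * 1 + r) c = parity_sign r c.
Proof. by rewrite /parity_sign odd_add2. Qed.

Lemma parity_sign_add2r r c : parity_sign r (2 * 1 + c) = parity_sign r c.
Proof. by rewrite /parity_sign odd_add2. Qed.

Lemma Aent_add2 r c : Aent (2 * 1 + r) (2 * 1 + c) = Aent r c.
Proof. by rewrite /Aent parity_sign_add2l parity_sign_add2r !odd_add2 /= !ltnS. Qed.

Lemma BmE k (r : 'I_2) (c : 'I_(2 * k.+1)) : Bm F k r c = parity_sign r c.
Proof.
elim: k r c => [|k IH] r c.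
  by rewrite /= mxE /parity_sign; case: r c => [[|[|r]] ?] [[|[|c]] ?].
rewrite /= castmxE /=; apply: row_mx_natE => {}r {}c.
  by rewrite mxE /parity_sign; case: r c => [[|[|r]] ?] [[|[|c]] ?].
by rewrite IH parity_sign_add2r.
Qed.

Lemma AmE k (r c : 'I_(2 * k.+1)) : Am F k r c = Aent r c.
Proof.
elim: k r c => [|k IH] r c.
  by rewrite /= mxE /Aent /parity_sign; case: r c => [[|[|r]] ?] [[|[|c]] ?].
rewrite /= castmxE /=; apply: block_mx_natE => {}r {}c.
- by rewrite mxE /Aent /parity_sign; case: r c => [[|[|r]] ?] [[|[|c]] ?].
- by rewrite BmE /Aent parity_sign_add2r; case: r => [[|[|]]].
- rewrite !mxE BmE /Aent parity_sign_add2l /parity_sign eq_sym.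
  by case: c => [[|[|]]] //= _; rewrite ltn0.
- by rewrite IH Aent_add2.
Qed.

Lemma CbasisE i (r : 'I_(2 * i)) (c : 'I_(2 * i).-1) : Cbasis F i r c = Aent r c.
Proof. by rewrite mxE; case: i r c => [|i] [r r_lt] c //; rewrite AmE. Qed.

End AEntries.

Section AProperties.
Variable F : fieldType.
Local Notation Aent := (@Aent F).

Lemma sum_nat_pairs N (f : nat -> F) :
  \sum_(0 <= c < N.*2) f c = \sum_(0 <= b < N) (f b.*2 + f b.*2.+1).
Proof.
elim: N => [|N IH]; first by rewrite !big_geq.
by rewrite doubleS !big_nat_recr //= IH addrA.
Qed.

Lemma sum_nat_delta N a (f : nat -> F) : (a < N)%N ->
  \sum_(0 <= b < N) (if b == a then f b else 0) = f a.
Proof. by move=> a_lt; rewrite -big_mkcond big_nat1_eq /= a_lt. Qed.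

Lemma Aent_eq0 r c : (Aent r c == 0) = (r == c).
Proof.
rewrite /Aent /parity_sign; case: ltngtP => [lt|gt|e].
- have -> : (r == c) = false by apply: contraTF lt => /eqP ->; rewrite ltnn.
  by case: (odd r == odd c); rewrite ?oppr_eq0 oner_eq0.
- have -> : (r == c) = false by apply: contraTF gt => /eqP ->; rewrite ltnn.
  by case: (odd r == odd c); rewrite oppr_eq0 ?oppr_eq0 oner_eq0.
have -> : (r == c) = (odd r == odd c).
  apply/eqP/eqP => [-> // | oe].
  by rewrite -(odd_double_half r) oe e odd_double_half.
by case: (odd r); case: (odd c); rewrite /= ?eqxx ?oppr_eq0 ?oner_eq0.
Qed.

Lemma Aent_colpair r b :
  Aent r b.*2 + Aent r b.*2.+1 = if b == r./2 then (if odd r then 1 else -1) else 0.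
Proof.
rewrite /Aent /parity_sign /= doubleK uphalf_double odd_double /=.
by case: ltngtP => _; case: (odd r); rewrite /= ?opprK ?addr0 ?add0r ?subrr ?addNr.
Qed.

Lemma Aent_rowpair a c :
  Aent a.*2 c + Aent a.*2.+1 c = if c./2 == a then (if odd c then -1 else 1) else 0.
Proof.
rewrite /Aent /parity_sign /= doubleK uphalf_double odd_double /=.
by case: ltngtP => _; case: (odd c); rewrite /= ?opprK ?addr0 ?add0r ?subrr ?addNr.
Qed.

Lemma sum_Aent_row N r : (r < N.*2)%N ->
  \sum_(0 <= c < N.*2) Aent r c = if odd r then 1 else -1.
Proof.
move=> r_lt; rewrite sum_nat_pairs; under eq_bigr do rewrite Aent_colpair.
by rewrite sum_nat_delta // ltn_half_double.
Qed.

Lemma Aent_last N r : (0 < N)%N -> (r < N.*2)%N ->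
  Aent r N.*2.-1 = if r == N.*2.-1 then 0 else if odd r then 1 else -1.
Proof.
move=> N_gt0 r_lt; have -> : N.*2.-1 = (N.-1).*2.+1 by lia.
rewrite /Aent /parity_sign /= uphalf_double odd_double /=.
have : (r./2 <= N.-1)%N by move: r_lt; rewrite -ltn_half_double; lia.
rewrite leq_eqVlt => /orP [/eqP e | lt]; last first.
  have -> : (r == (N.-1).*2.+1) = false.
    by apply: contraTF lt => /eqP ->; rewrite /= uphalf_double ltnn.
  by rewrite lt; case: (odd r).
have rE := odd_double_half r; rewrite e ltnn in rE *.
by case: (odd r) rE => /= <-; rewrite ?eqxx // add0n eqn_leq ltnn andbF.
Qed.

Lemma sum_Aent_row_butlast N r : (0 < N)%N -> (r < 2 * N)%N ->
  \sum_(0 <= c < (2 * N).-1) Aent r c = (r == (2 * N).-1)%:R.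
Proof.
rewrite mul2n => N_gt0 r_lt; have := sum_Aent_row r_lt.
rewrite -[in \sum_(0 <= c < N.*2) _](prednK (n := N.*2)) ?double_gt0 //.
rewrite big_nat_recr //= Aent_last //.
case: (r =P N.*2.-1) => [rE | _]; last by rewrite -[X in _ = X]add0r => /addIr ->.
have -> : odd r by rewrite rE -subn1 oddB ?double_gt0 // odd_double.
by rewrite addr0 => ->.
Qed.

(* The row-pair sums isolate y_2a - y_2a+1, then row 2a isolates -y_2a. *)
Lemma Aent_col_free N (y : nat -> F) :
  (forall r, (r < N.*2)%N -> \sum_(0 <= c < N.*2) Aent r c * y c = 0) ->
  forall c, (c < N.*2)%N -> y c = 0.
Proof.
move=> Ay0.
have y_pair a : (a < N)%N -> y a.*2.+1 = y a.*2.
  move=> a_lt; apply/esym/eqP; rewrite -subr_eq0.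
  have r0_lt : (a.*2 < N.*2)%N by lia.
  have r1_lt : (a.*2.+1 < N.*2)%N by lia.
  have := congr2 +%R (Ay0 _ r0_lt) (Ay0 _ r1_lt).
  rewrite -big_split sum_nat_pairs addr0 /= => <-; apply/eqP.
  rewrite -(sum_nat_delta (fun b => y b.*2 - y b.*2.+1) a_lt); apply: eq_bigr => b _.
  rewrite -!mulrDl Aent_rowpair Aent_rowpair /= doubleK uphalf_double odd_double /=.
  by case: (b == a); rewrite ?mul1r ?mulN1r ?mul0r ?addr0.
have y_even a : (a < N)%N -> y a.*2 = 0.
  move=> a_lt; have r0_lt : (a.*2 < N.*2)%N by lia.
  have := Ay0 _ r0_lt; rewrite sum_nat_pairs => sum0.
  apply/eqP; rewrite -oppr_eq0 -sum0 -(sum_nat_delta (fun b => - y b.*2) a_lt).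
  apply/eqP; apply: eq_big_nat => b /andP [_ b_lt].
  rewrite y_pair // -mulrDl Aent_colpair doubleK odd_double.
  by case: (b == a); rewrite ?mulN1r ?mul0r.
move=> c c_lt; have a_lt : (c./2 < N)%N by rewrite ltn_half_double.
by rewrite -(odd_double_half c); case: (odd c); rewrite /= ?add1n ?add0n ?y_pair // y_even.
Qed.

End AProperties.

Section CCode.
Variable F : fieldType.

Lemma Cbasis_mulE i (v : 'cV[F]_(2 * i).-1) (r : 'I_(2 * i)) :
  (Cbasis F i *m v) r 0 = \sum_(0 <= c < i.*2) Aent F r c * ent v c 0.
Proof.
have i_gt0 : (0 < i)%N by case: i r v => [[]|].
rewrite mxE -mul2n -[X in \sum_(0 <= c < X) _](prednK (n := 2 * i)) ?muln_gt0 //.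
rewrite big_nat_recr //= ent_out // mulr0 addr0 big_mkord.
by apply: eq_bigr => c _; rewrite CbasisE (entE v c 0).
Qed.

Lemma rank_Cbasis i : \rank (Cbasis F i) = (2 * i).-1.
Proof.
apply/eqP/col_freeP => v Cv0.
have v0 : forall c, (c < i.*2)%N -> ent v c 0 = 0.
  apply: Aent_col_free => r r_lt; rewrite -mul2n in r_lt.
  by have := Cbasis_mulE v (Ordinal r_lt); rewrite Cv0 mxE /= => <-.
apply/matrixP => c y; rewrite (ord1 y) mxE -(entE v c 0) v0 //.
by have := ltn_ord c; lia.
Qed.

Lemma wt_col_Cbasis i (j : 'I_(2 * i).-1) : wt (col j (Cbasis F i)) = (2 * i - 1)%N.
Proof.
have -> : (2 * i - 1 = #|'I_(2 * i)|.-1)%N by rewrite card_ord subn1.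
rewrite /wt -(cardC1 (widen_ord (leq_pred _) j)); apply: eq_card => t.
by rewrite !inE mxE CbasisE Aent_eq0.
Qed.

Lemma wt_sum_col_Cbasis i : (0 < i)%N -> wt (\sum_j col j (Cbasis F i)) = 1%N.
Proof.
move=> i_gt0; have last_lt : ((2 * i).-1 < 2 * i)%N by rewrite prednK ?muln_gt0.
rewrite /wt -[RHS](card1 (Ordinal last_lt)); apply: eq_card => t.
rewrite !inE summxE (eq_bigr (fun c : 'I_(2 * i).-1 => Aent F t c)); last first.
  by move=> c _; rewrite mxE CbasisE.
rewrite -(big_mkord xpredT (Aent F t)) sum_Aent_row_butlast //.
by rewrite -[RHS](inj_eq val_inj) /=; case: (nat_of_ord t == _); rewrite ?oner_eq0 ?eqxx.
Qed.

Lemma code_profile_Cbasis i : (0 < i)%N -> code_profile (Cbasis F i) 1 (2 * i - 1).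
Proof.
move=> i_gt0; split; [exact: rank_Cbasis | split | exact: wt_col_Cbasis |
                      exact: wt_sum_col_Cbasis].
  exists (\sum_j col j (Cbasis F i)); split; last exact: wt_sum_col_Cbasis.
    by exists (const_mx 1); rewrite sum_col_mulmx.
  by rewrite -wt_gt0 wt_sum_col_Cbasis.
by move=> v _; rewrite -wt_gt0.
Qed.

End CCode.

Definition dseq (i j : nat) : nat := \prod_(1 <= l < j.+1) (2 * i - 1 + l).
Definition useq (i j : nat) : nat := (2 * i - 1) * \prod_(1 <= l < j.+1) (2 * i - 2 + l).

Lemma dseqS i j : dseq i j.+1 = (dseq i j * (2 * i - 1 + j).+1)%N.
Proof. by rewrite /dseq big_nat_recr //= addnS. Qed.

Lemma useqS i j : (0 < i)%N -> useq i j.+1 = ((2 * i - 1 + j) * useq i j)%N.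
Proof.
move=> i_gt0; rewrite /useq big_nat_recr //=.
have -> : (2 * i - 2 + j.+1 = 2 * i - 1 + j)%N by lia.
by rewrite mulnA mulnC.
Qed.

Lemma useq_dseq i j : (0 < i)%N ->
  (useq i j * (2 * i - 1 + j) = (2 * i - 1) ^ 2 * dseq i j)%N.
Proof.
move=> i_gt0; elim: j => [|j IH].
  by rewrite /useq /dseq !big_geq // !muln1 addn0.
by rewrite useqS // dseqS addnS [(_ * useq i j)%N]mulnC IH -mulnA.
Qed.

(* (2i-1)^2 >= 2i + j is exactly the range of j in the theorem. *)
Lemma dseq_useq_bounded i j : (2 <= i)%N -> (j <= 4 * i ^ 2 - 6 * i + 1)%N ->
  (dseq i j * (2 * i - 1 + j).+1 <= useq i j * (2 * i - 1 + j))%N.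
Proof.
move=> i_ge2 j_le; rewrite useq_dseq ?(ltnW i_ge2) // mulnC leq_mul2r.
apply/orP; right; move: j_le; rewrite !expnS !expn0 !muln1; nia.
Qed.

Lemma Cmat_iter_profile (F : fieldType) i j : (2 <= i)%N -> (j <= 4 * i ^ 2 - 6 * i + 1)%N ->
  let X := basis_iter j (Cmat F i) in
  projT1 X = (2 * i * dseq i j, 2 * i - 1 + j)%N /\
  code_profile (projT2 X) (dseq i j) (useq i j).
Proof.
move=> i_ge2; elim: j => [|j IH] j_le /=.
  rewrite /dseq /useq !big_geq // muln1 addn0 muln1; split; first by congr pair; lia.
  by apply: code_profile_Cbasis; lia.
have [dimY profY] := IH (ltnW j_le).
set Y := basis_iter j (Cmat F i) in dimY profY *.
have kY : (projT1 Y).2 = (2 * i - 1 + j)%N by rewrite dimY.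
split; first by rewrite dimY /= dseqS mulnA addnS.
rewrite dseqS useqS ?(ltnW i_ge2) // -kY; apply: code_profile_basis_mx profY _.
by rewrite kY dseq_useq_bounded // ltnW.
Qed.

Theorem proposition4p5 (F : fieldType) (i : nat) (hi : (2 <= i)%N) :
  (is_code (Cbasis F i) (2 * i) (2 * i - 1) 1 /\
   bounded (Cbasis F i) (2 * i - 1))
  /\
  (forall j : nat, (1 <= j <= 4 * i ^ 2 - 6 * i + 1)%N ->
     let X := basis_iter j (Cmat F i) in
     let pj := (\prod_(1 <= l < j.+1) (2 * i - 1 + l))%N in
     is_code (projT2 X) (2 * i * pj) (2 * i - 1 + j) pj /\
     bounded (projT2 X) ((2 * i - 1) * \prod_(1 <= l < j.+1) (2 * i - 2 + l))%N).
Proof.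
have profC := code_profile_Cbasis F (ltnW hi).
have dimC : (2 * i).-1 = (2 * i - 1)%N by rewrite subn1.
split; first split.
- by rewrite -dimC; exact: code_profile_is_code profC.
- by apply: (code_profile_bounded profC); rewrite dimC mul1n; nia.
move=> j /andP [_ j_le] X pj.
have [dimX profX] := Cmat_iter_profile F hi j_le.
have kX : (projT1 X).2 = (2 * i - 1 + j)%N by rewrite dimX.
have [rkX MdX _ _] := profX.
split; first by split; rewrite ?dimX ?rkX ?kX.
by apply: (code_profile_bounded profX); rewrite kX; exact: dseq_useq_bounded.
Qed.
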